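(* Let $n,m\ge 1$, let $c_1,\dots,c_n>0$, $T>0$, $\epsilon>0$, let $r_1,\dots,r_m>0$, and let $\kappa_{ij}\ge 0$ ($i=1,\dots,m$, $j=1,\dots,n$). For $j=1,\dots,n$ define $\beta_j:\mathbb{R}\to\mathbb{R}$ by $\beta_j(q_j)=0$ if $q_j\le c_j$ and $\beta_j(q_j)=q_j-c_j-c_j\log(q_j/c_j)$ if $q_j>c_j$. Consider the optimization problem in the variables $X=(x_{ij})\in\mathbb{R}^{m\times n}$ and $q=(q_j)\in\mathbb{R}^n$: $$\min\ C(X,q):=\sum_{i,j}\kappa_{ij}x_{ij}+\sum_j\beta_j(q_j)+\epsilon\sum_{i,j}x_{ij}\log\Big(\frac{x_{ij}}{r_i}\Big)$$ subject to $x_{ij}\ge 0$ for all $i,j$; $\sum_j x_{ij}=r_i$ for all $i$; and $\sum_i x_{ij}=q_j/T$ for all $j$. Then this problem is feasible and has a unique optimal point $(X^*,q^* )$.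
   Context: The convention $0\log 0=0$ is used in the entropy term. Interpretation: $j$ indexes EV charging stations with capacities $c_j$, $i$ indexes demand locations with request rates $r_i$, $\kappa_{ij}$ are travel times, $T$ is the mean sojourn time. *)

From mathcomp Require Import all_boot all_order all_algebra.
From mathcomp Require Import all_classical all_reals all_analysis.
Set Implicit Arguments. Unset Strict Implicit. Unset Printing Implicit Defensive.
Import Order.TTheory GRing.Theory Num.Theory.
Local Open Scope ring_scope.

Definition beta {R : realType} (c qj : R) : R :=
  if qj <= c then 0 else qj - c - c * ln (qj / c).

Definition xlog {R : realType} (x r : R) : R :=
  if x == 0 then 0 else x * ln (x / r).

Definition cost {R : realType} (m n : nat) (kappa : 'I_m -> 'I_n -> R)
  (c : 'I_n -> R) (r : 'I_m -> R) (eps : R)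
  (X : 'M[R]_(m, n)) (q : 'rV[R]_n) : R :=
  \sum_(i < m) \sum_(j < n) kappa i j * X i j
  + \sum_(j < n) beta (c j) (q 0 j)
  + eps * \sum_(i < m) \sum_(j < n) xlog (X i j) (r i).

Definition feasible {R : realType} (m n : nat) (r : 'I_m -> R) (T : R)
  (X : 'M[R]_(m, n)) (q : 'rV[R]_n) : Prop :=
  (forall i j, 0 <= X i j) /\
  (forall i, \sum_(j < n) X i j = r i) /\
  (forall j, \sum_(i < m) X i j = q 0 j / T).

Definition optimal {R : realType} (m n : nat) (kappa : 'I_m -> 'I_n -> R)
  (c : 'I_n -> R) (r : 'I_m -> R) (T eps : R)
  (X : 'M[R]_(m, n)) (q : 'rV[R]_n) : Prop :=
  feasible r T X q /\
  (forall Y p, feasible r T Y p ->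
     cost kappa c r eps X q <= cost kappa c r eps Y p).

From mathcomp Require Import all_boot all_order all_algebra.
From mathcomp Require Import all_classical all_reals all_analysis.
From mathcomp Require Import ring lra.
Import Order.TTheory GRing.Theory Num.Theory.
Import numFieldTopology.Exports numFieldNormedType.Exports.
Set Implicit Arguments. Unset Strict Implicit. Unset Printing Implicit Defensive.
Local Open Scope ring_scope.

(* The load q is determined by X through the column constraints, so on the
   feasible set the cost is a function of the transport plan X alone.  It is
   continuous (x log x -> 0 at 0) on the compact polytope of nonnegative
   matrices with row sums r, hence attains its minimum.  For uniqueness, the
   tangent-line inequality ln z <= z - 1 makes beta convex and x log (x/r)
   strictly convex; the transport term is linear and eps > 0, so the midpoint of
   two optimal plans that differ somewhere would be feasible with strictly
   smaller cost.  Equal plans then have equal loads. *)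

Section RealFunctions.
Variable R : realType.
Implicit Types x y z a b c r t : R.

Lemma ln_lt_sub1 z : 0 < z -> z != 1 -> ln z < z - 1.
Proof.
move=> z0 z1; have : ln z != 0 by rewrite ln_eq0.
by move/expR_gt1Dx; rewrite lnK ?posrE // => h; lra.
Qed.

Lemma ln_le_sub1 z : 0 < z -> ln z <= z - 1.
Proof.
by move=> z0; have [->|/(ln_lt_sub1 z0)/ltW//] := eqVneq z 1; rewrite ln1 subrr.
Qed.

Lemma xlogE x r : xlog x r = x * ln (x / r).
Proof. by rewrite /xlog; case: eqP => [->|]; rewrite ?mul0r. Qed.

Lemma xlog_tangent_lt x y r : 0 < r -> 0 < y -> 0 <= x -> x != y ->
  xlog y r + (ln (y / r) + 1) * (x - y) < xlog x r.
Proof.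
move=> r0 y0; rewrite le0r => /predU1P[-> _|x0 xy].
  rewrite !xlogE mul0r; lra.
have yx1 : y / x != 1 by apply: contra_neq xy => /divr1_eq.
have := ln_lt_sub1 (divr_gt0 y0 x0) yx1.
rewrite !xlogE ln_div ?posrE // -(ltr_pM2l x0) mulrBr mulrCA divff ?gt_eqF //.
rewrite !ln_div ?posrE //; lra.
Qed.

Lemma xlog_midpoint_lt a b r : 0 < r -> 0 <= a -> 0 <= b -> a != b ->
  2 * xlog ((a + b) / 2) r < xlog a r + xlog b r.
Proof.
move=> r0 a0 b0 ab.
have ay : a != (a + b) / 2 by apply: contra_neq ab => h; lra.
have by_ : b != (a + b) / 2 by apply: contra_neq ab => h; lra.
have y0 : 0 < (a + b) / 2.
  by rewrite lt_neqAle divr_ge0 ?addr_ge0 // andbT; apply: contra_neq ab => h; lra.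
have := xlog_tangent_lt r0 y0 a0 ay; have := xlog_tangent_lt r0 y0 b0 by_.
lra.
Qed.

Lemma xlog_midpoint_le a b r : 0 < r -> 0 <= a -> 0 <= b ->
  2 * xlog ((a + b) / 2) r <= xlog a r + xlog b r.
Proof.
move=> r0 a0 b0; have [->|ab] := eqVneq a b; last exact/ltW/xlog_midpoint_lt.
have -> : (b + b) / 2 = b by field.
lra.
Qed.

Lemma betaE c q : 0 < c ->
  beta c q = Num.max q c - c - c * ln (Num.max q c / c).
Proof.
by move=> c0; rewrite /beta; case: leP => // _; rewrite divff ?gt_eqF // ln1; ring.
Qed.

Lemma beta_ge0 c q : 0 < c -> 0 <= beta c q.
Proof.
move=> c0; rewrite betaE //; set M := Num.max q c.
have M0 : 0 < M by rewrite lt_max c0 orbT.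
have := ln_le_sub1 (divr_gt0 M0 c0).
by rewrite -(ler_pM2l c0) mulrBr mulrCA divff ?gt_eqF //; lra.
Qed.

Lemma beta_tangent c x y : 0 < c -> c < y ->
  beta c y + (1 - c / y) * (x - y) <= beta c x.
Proof.
move=> c0 cy; have y0 : 0 < y by apply: lt_trans cy.
rewrite (betaE x c0) /beta (lt_geF cy); set M := Num.max x c.
have M0 : 0 < M by rewrite lt_max c0 orbT.
have xM : 0 <= M - x by rewrite subr_ge0 le_max lexx.
have slope0 : 0 <= 1 - c / y by rewrite subr_ge0 ler_pdivrMr // mul1r ltW.
have cyy : c / y * y = c by rewrite divfK ?gt_eqF.
have := mulr_ge0 slope0 xM.
have := ln_le_sub1 (divr_gt0 M0 y0); rewrite -(ler_pM2l c0).
rewrite !ln_div ?posrE //; lra.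
Qed.

Lemma beta_midpoint c a b : 0 < c ->
  2 * beta c ((a + b) / 2) <= beta c a + beta c b.
Proof.
move=> c0; have [yc|cy] := leP ((a + b) / 2) c.
  by rewrite {1}/beta yc mulr0 addr_ge0 ?beta_ge0.
have := beta_tangent a c0 cy; have := beta_tangent b c0 cy; lra.
Qed.

Lemma xlnx_bound t : 0 < t -> t <= 1 -> `|t * ln t| <= 2 * Num.sqrt t.
Proof.
move=> t0 t1; set w := Num.sqrt t.
have w0 : 0 < w by rewrite sqrtr_gt0.
have tw : t = w * w by rewrite -expr2 sqr_sqrtr ?ltW.
have := @ln_sublinear _ w^-1; rewrite invr_gt0 => /(_ w0).
rewrite lnV ?posrE // -(ltr_pM2l (mulr_gt0 w0 w0)).
rewrite ler0_norm; last by apply: mulr_ge0_le0; [exact: ltW | exact: ln_le0].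
by rewrite tw lnM ?posrE // mulfK ?gt_eqF //; lra.
Qed.

Lemma continuous_xlnx : continuous (fun t : R => t * ln t).
Proof.
move=> t0; have [t0_lt0|t0_gt0|->] := ltgtP t0 0.
- rewrite /continuous_at (ln0 (ltW t0_lt0)) mulr0; apply: cvg_near_cst.
  by near do rewrite ln0 ?mulr0 ?ltW //; exact: lt_nbhsl.
- by apply: cvgM; [exact: cvg_id | exact: continuous_ln].
rewrite /continuous_at mul0r; apply/cvgrPdist_lt => e e0.
have e2 : 0 < (e / 2) ^+ 2 by rewrite exprn_gt0 ?divr_gt0.
near=> t.
rewrite sub0r normrN; have [t_le0|t_gt0] := leP t 0.
  by rewrite ln0 ?mulr0 ?normr0.
apply: le_lt_trans (xlnx_bound t_gt0 (ltW _)) _.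
  by near: t; exact: lt_nbhsl ltr01.
suff : Num.sqrt t < e / 2 by lra.
rewrite -(ger0_norm (ltW (divr_gt0 e0 _))) // -sqrtr_sqr ltr_sqrt //.
by near: t; exact: lt_nbhsl e2.
Unshelve. all: by end_near.
Qed.

Lemma xlog_continuous r : 0 < r -> continuous (xlog ^~ r).
Proof.
move=> r0; have -> : xlog ^~ r = fun x => r * (x / r * ln (x / r)).
  by apply/funext => x; rewrite xlogE mulrA mulrCA divff ?gt_eqF ?mulr1.
move=> x; apply: cvgM; first exact: cvg_cst.
apply: (@continuous_comp _ _ _ (fun x => x / r) (fun t => t * ln t)).
  by apply: cvgM; [exact: cvg_id | exact: cvg_cst].
exact: continuous_xlnx.
Qed.

Lemma beta_continuous c : 0 < c -> continuous (beta c).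
Proof.
move=> c0; have -> : beta c = fun q => Num.max q c - c - c * ln (Num.max q c / c).
  by apply/funext => q; rewrite betaE.
move=> q; have max_cont : {for q, continuous (fun q => Num.max q c)}.
  by apply: (@continuous_max _ _ id (fun=> c)); [exact: cvg_id | exact: cvg_cst].
apply: cvgB; first by apply: cvgB; [exact: max_cont | exact: cvg_cst].
apply: cvgM; first exact: cvg_cst.
have arg_cont : {for q, continuous (fun q => Num.max q c / c)}.
  by apply: cvgM; [exact: max_cont | exact: cvg_cst].
have arg_gt0 : 0 < Num.max q c / c by rewrite divr_gt0 // lt_max c0 orbT.
exact: (continuous_comp arg_cont (continuous_ln arg_gt0)).
Qed.

End RealFunctions.

Lemma ler_ltr_sum (R : numDomainType) (I : finType) (F G : I -> R) i0 :
  (forall i, F i <= G i) -> F i0 < G i0 -> \sum_i F i < \sum_i G i.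
Proof.
move=> FG FGi0; rewrite (bigD1 i0) //= [ltRHS](bigD1 i0) //=.
by rewrite ltr_leD // ler_sum.
Qed.

Lemma continuous_sum (K : numFieldType) (V : normedModType K)
    (U : topologicalType) (I : finType) (F : I -> U -> V) x :
  (forall i, {for x, continuous (F i)}) ->
  {for x, continuous (fun y => \sum_i F i y)}.
Proof. by move=> F_cont; apply: (cvg_big add_continuous) => // i _; exact: F_cont. Qed.

Section Problem.
Variables (R : realType) (m n : nat) (c : 'I_n -> R) (r : 'I_m -> R)
  (kappa : 'I_m -> 'I_n -> R) (T eps : R).
Hypotheses (c_gt0 : forall j, 0 < c j) (r_gt0 : forall i, 0 < r i)
  (T_gt0 : 0 < T) (eps_gt0 : 0 < eps).

Local Notation cost := (cost kappa c r eps).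
Local Notation feasible := (feasible r T).
Local Notation optimal := (optimal kappa c r T eps).

Definition loadrow (X : 'M[R]_(m, n)) : 'rV[R]_n := \row_j (T * \sum_i X i j).

Lemma feasibleP (X : 'M[R]_(m, n)) (q : 'rV[R]_n) : feasible X q <->
  [/\ forall i j, 0 <= X i j, forall i, \sum_j X i j = r i & q = loadrow X].
Proof.
have loadE j : T * (q 0 j / T) = q 0 j by rewrite mulrC divfK ?gt_eqF.
split=> [[X0 [Xr Xq]]|[X0 Xr ->]]; last first.
  by do 2!split=> //; move=> j; rewrite mxE; field; rewrite gt_eqF.
by split=> //; apply/rowP => j; rewrite mxE Xq loadE.
Qed.

Lemma feasible_midpoint (X Y : 'M[R]_(m, n)) (q p : 'rV[R]_n) :
  feasible X q -> feasible Y p -> feasible (2^-1 *: (X + Y)) (2^-1 *: (q + p)).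
Proof.
move=> [X0 [Xr Xq]] [Y0 [Yr Yp]].
split; first by move=> i j; rewrite !mxE mulr_ge0 ?addr_ge0.
split=> [i|j]; under eq_bigr do rewrite !mxE.
  by rewrite -mulr_sumr big_split /= Xr Yr; field.
by rewrite -mulr_sumr big_split /= Xq Yp !mxE; field; rewrite gt_eqF.
Qed.

Lemma cost_midpoint_lt (X Y : 'M[R]_(m, n)) (q p : 'rV[R]_n) i0 j0 :
  (forall i j, 0 <= X i j) -> (forall i j, 0 <= Y i j) -> X i0 j0 != Y i0 j0 ->
  2 * cost (2^-1 *: (X + Y)) (2^-1 *: (q + p)) < cost X q + cost Y p.
Proof.
move=> X0 Y0 XY0; rewrite /cost !pair_big /=.
have transport_part :
    2 * \sum_(k : 'I_m * 'I_n) kappa k.1 k.2 * (2^-1 *: (X + Y)) k.1 k.2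
    = \sum_k kappa k.1 k.2 * X k.1 k.2 + \sum_k kappa k.1 k.2 * Y k.1 k.2.
  by rewrite mulr_sumr -big_split; apply: eq_bigr => k _; rewrite !mxE /=; field.
have congestion_part : 2 * \sum_j beta (c j) ((2^-1 *: (q + p)) 0 j)
    <= \sum_j beta (c j) (q 0 j) + \sum_j beta (c j) (p 0 j).
  rewrite mulr_sumr -big_split /= ler_sum // => j _.
  by rewrite !mxE [2^-1 * _]mulrC beta_midpoint.
have entropy_part :
    2 * \sum_(k : 'I_m * 'I_n) xlog ((2^-1 *: (X + Y)) k.1 k.2) (r k.1)
    < \sum_k xlog (X k.1 k.2) (r k.1) + \sum_k xlog (Y k.1 k.2) (r k.1).
  rewrite mulr_sumr -big_split /=; apply: (@ler_ltr_sum _ _ _ _ (i0, j0)) => [k|];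
    by rewrite !mxE [2^-1 * _]mulrC ?xlog_midpoint_le ?xlog_midpoint_lt.
have := entropy_part; rewrite -(ltr_pM2l eps_gt0); lra.
Qed.

Lemma optimal_unique (X Y : 'M[R]_(m, n)) (q p : 'rV[R]_n) :
  optimal X q -> optimal Y p -> X = Y /\ q = p.
Proof.
move=> [fX X_min] [fY Y_min].
have [[X0 _ qX] [Y0 _ pY]] := ((feasibleP X q).1 fX, (feasibleP Y p).1 fY).
suff XY : X = Y by rewrite qX pY XY.
have same_cost : cost X q = cost Y p by apply/le_anti; rewrite X_min ?Y_min.
apply/matrixP => i j; apply/eqP/negPn/negP => XYij.
have := X_min _ _ (feasible_midpoint fX fY).
have := cost_midpoint_lt q p X0 Y0 XYij; lra.
Qed.

Hypothesis n_gt0 : (0 < n)%N.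

Local Open Scope classical_set_scope.

Local Notation plan := (prod_topology (fun _ : 'I_m * 'I_n => R)).

Definition mx_of_plan (x : plan) : 'M[R]_(m, n) := \matrix_(i, j) x (i, j).

Definition plans : set plan :=
  [set x | (forall k, 0 <= x k) /\ forall i, \sum_j x (i, j) = r i].

Lemma plan_entry_continuous k : continuous (fun x : plan => x k).
Proof. exact: proj_continuous. Qed.

Lemma plans_closed : closed plans.
Proof.
have -> : plans =
    \bigcap_k ((fun x : plan => x k) @^-1` [set y | 0 <= y]) `&`
    \bigcap_i ((fun x : plan => \sum_j x (i, j)) @^-1` [set r i]).
  apply/seteqP; split=> x [x0 xr].
    by split=> k _; [exact: x0 | exact: xr].
  by split=> k; [exact: x0 | exact: xr].
apply: closedI; apply: closed_bigI => k _; apply: preimage_closed.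
- by move=> x _; exact: plan_entry_continuous.
- exact: closed_ge.
- by move=> x _; apply: continuous_sum => j; exact: plan_entry_continuous.
- exact: closed_eq.
Qed.

Lemma plans_compact : compact plans.
Proof.
have box_compact := @tychonoff _ (fun _ : 'I_m * 'I_n => R)
  (fun _ => `[0, \sum_i r i]) (fun _ => @segment_compact _ 0 _).
apply: subclosed_compact plans_closed box_compact _ => x [x0 xr] [i j] /=.
rewrite in_itv /= x0 (le_trans (y := r i)) //.
  by rewrite -xr (bigD1 j) //= lerDl; apply: sumr_ge0.
by rewrite (bigD1 i) //= lerDl; apply: sumr_ge0 => i' _; exact: ltW.
Qed.

Lemma plans_nonempty : plans !=set0.
Proof.
exists (fun k => r k.1 / n%:R); split=> [k|i] /=.
  by rewrite divr_ge0 ?ler0n ?ltW.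
by rewrite sumr_const card_ord -[_ *+ n]mulr_natr divfK // pnatr_eq0 -lt0n.
Qed.

Definition plan_cost (x : plan) : R :=
  cost (mx_of_plan x) (loadrow (mx_of_plan x)).

Lemma plan_cost_continuous : continuous plan_cost.
Proof.
have -> : plan_cost = fun x =>
    \sum_i \sum_j kappa i j * x (i, j) + \sum_j beta (c j) (T * \sum_i x (i, j))
    + eps * \sum_i \sum_j xlog (x (i, j)) (r i).
  apply/funext => x; rewrite /plan_cost /cost; congr (_ + _ + _ * _).
  - by apply: eq_bigr => i _; apply: eq_bigr => j _; rewrite mxE.
  - apply: eq_bigr => j _; rewrite mxE; congr (beta _ (_ * _)).
    by apply: eq_bigr => i _; rewrite mxE.
  - by apply: eq_bigr => i _; apply: eq_bigr => j _; rewrite mxE.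
(* The [fun x : plan => _] patterns stop unification from unfolding the
   product topology, where unification
   otherwise does not terminate in practice. *)
move=> x; apply: (@continuousD _ _ _ (fun x : plan => _) (fun x : plan => _)).
  apply: (@continuousD _ _ _ (fun x : plan => _) (fun x : plan => _)).
    apply: continuous_sum => i; apply: continuous_sum => j.
    apply: (@continuousM _ _ (fun x : plan => _) (fun x : plan => _)).
      exact: cst_continuous.
    exact: plan_entry_continuous.
  apply: continuous_sum => j.
  apply: (@continuous_comp _ _ _ (fun y : plan => T * \sum_i y (i, j)) (beta (c j))).
    apply: (@continuousM _ _ (fun x : plan => _) (fun x : plan => _)).
      exact: cst_continuous.
    by apply: continuous_sum => i; exact: plan_entry_continuous.
  exact: beta_continuous.
apply: (@continuousM _ _ (fun x : plan => _) (fun x : plan => _)).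
  exact: cst_continuous.
apply: continuous_sum => i; apply: continuous_sum => j.
apply: (@continuous_comp _ _ _ (fun y : plan => y (i, j)) (xlog ^~ (r i))).
  exact: plan_entry_continuous.
exact: xlog_continuous.
Qed.

Lemma optimal_exists : exists X q, optimal X q.
Proof.
have [x0 /set_mem [x0_ge0 x0_r] x0_min] := compact_EVT_min plans_nonempty
  plans_compact (continuous_subspaceT plan_cost_continuous).
exists (mx_of_plan x0), (loadrow (mx_of_plan x0)); split.
  apply/feasibleP; split=> // [i j|i]; first by rewrite mxE.
  by rewrite -x0_r; apply: eq_bigr => j _; rewrite mxE.
move=> Y p /feasibleP[Y0 Yr ->].
have -> : Y = mx_of_plan (fun k => Y k.1 k.2) by apply/matrixP => i j; rewrite mxE.
by apply: x0_min; apply: mem_set; split=> [k|i]; [exact: Y0 | exact: Yr].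
Qed.

End Problem.

Theorem proposition1 (R : realType) (m n : nat)
  (c : 'I_n -> R) (r : 'I_m -> R) (kappa : 'I_m -> 'I_n -> R) (T eps : R) :
  (1 <= m)%N -> (1 <= n)%N ->
  (forall j, 0 < c j) -> 0 < T -> 0 < eps ->
  (forall i, 0 < r i) -> (forall i j, 0 <= kappa i j) ->
  (exists (X : 'M[R]_(m, n)) (q : 'rV[R]_n), feasible r T X q) /\
  (exists (X : 'M[R]_(m, n)) (q : 'rV[R]_n),
     optimal kappa c r T eps X q /\
     forall (Y : 'M[R]_(m, n)) (p : 'rV[R]_n),
       optimal kappa c r T eps Y p -> Y = X /\ p = q).
Proof.
move=> _ n_gt0 c_gt0 T_gt0 eps_gt0 r_gt0 _.
have [X [q Xq_opt]] := optimal_exists kappa eps c_gt0 r_gt0 T_gt0 n_gt0.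
split; first by exists X, q; case: Xq_opt.
exists X, q; split=> // Y p Yp_opt.
exact: (optimal_unique c_gt0 r_gt0 T_gt0 eps_gt0 Yp_opt Xq_opt).
Qed.
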